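(* Let $G$ and $H$ be finite, simple, connected graphs, each of order at least $2$. The direct product $G \times H$ is well-dominated if and only if $G\times H$ is isomorphic to $K_3\times K_3$, or $G\times H$ is isomorphic to $K_2\times C_4$, or $G \times H$ is isomorphic to $K_2 \times (F \odot K_1)$ for some connected graph $F$.
   Context: A set $D$ of vertices of a graph is dominating if every vertex is in $D$ or adjacent to a vertex of $D$. A graph is well-dominated if every minimal (with respect to inclusion) dominating set is a minimum dominating set, i.e. $\gamma(G)=\Gamma(G)$, where $\gamma$ and $\Gamma$ denote the smallest and largest cardinality of a minimal dominating set. The direct product $G\times H$ has vertex set $V(G)\times V(H)$, with $(g_1,h_1)$ adjacent to $(g_2,h_2)$ iff $g_1g_2\in E(G)$ and $h_1h_2\in E(H)$. The corona $F\odot K_1$ is obtained from $F$ by adding, for each vertex $u$ of $F$, a new vertex $u'$ and the edge $uu'$. The paper's standing assumption is that all graphs are finite, undirected, simple and of order at least $2$. *)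

From mathcomp Require Import all_boot.
Set Implicit Arguments. Unset Strict Implicit. Unset Printing Implicit Defensive.

Record sgraph := SGraph {
  vertex : finType;
  adj : rel vertex;
  adj_sym : symmetric adj;
  adj_irr : irreflexive adj }.

Definition gorder (G : sgraph) : nat := #|vertex G|.

Definition connected (G : sgraph) : Prop :=
  forall x y : vertex G, connect (@adj G) x y.

Definition dominating (G : sgraph) (D : {set vertex G}) : bool :=
  [forall v, (v \in D) || [exists u in D, adj u v]].

Definition minimal_dominating (G : sgraph) (D : {set vertex G}) : bool :=
  minset (@dominating G) D.

Definition well_dominated (G : sgraph) : Prop :=
  forall D : {set vertex G}, minimal_dominating D ->
    forall D' : {set vertex G}, dominating D' -> #|D| <= #|D'|.

Definition isomorphic (G H : sgraph) : Prop :=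
  exists f : vertex G -> vertex H,
    bijective f /\ forall x y, adj (f x) (f y) = adj x y.

Definition dprod_adj (G H : sgraph) : rel (vertex G * vertex H) :=
  fun p q => adj p.1 q.1 && adj p.2 q.2.

Lemma dprod_sym G H : symmetric (@dprod_adj G H).
Proof. by move=> p q; rewrite /dprod_adj !(adj_sym _ p.1) (adj_sym _ p.2). Qed.

Lemma dprod_irr G H : irreflexive (@dprod_adj G H).
Proof. by move=> p; rewrite /dprod_adj adj_irr. Qed.

Definition dprod_graph (G H : sgraph) : sgraph :=
  SGraph (@dprod_sym G H) (@dprod_irr G H).

Definition K_adj n : rel 'I_n := fun i j => i != j.
Lemma K_sym n : symmetric (@K_adj n).
Proof. by move=> i j; rewrite /K_adj eq_sym. Qed.
Lemma K_irr n : irreflexive (@K_adj n).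
Proof. by move=> i; rewrite /K_adj eqxx. Qed.
Definition K n : sgraph := SGraph (@K_sym n) (@K_irr n).

(* cycle C_n (meaningful for n >= 3): i ~ j iff j = i+1 or i = j+1 mod n *)
Definition C_adj n : rel 'I_n :=
  fun i j => (j == (i.+1 %% n) :> nat) || (i == (j.+1 %% n) :> nat).
Lemma C_sym n : symmetric (@C_adj n).
Proof. by move=> i j; rewrite /C_adj orbC. Qed.
Lemma C4_irr : irreflexive (@C_adj 4).
Proof. by case=> [[|[|[|[|?]]]] ?]. Qed.
Definition C4 : sgraph := SGraph (@C_sym 4) C4_irr.

(* corona F ⊙ K_1: inl u is the original vertex u, inr u is its pendant u' *)
Definition corona_adj (F : sgraph) : rel (vertex F + vertex F) :=
  fun x y => match x, y with
  | inl a, inl b => adj a b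
  | inl a, inr b => a == b
  | inr a, inl b => a == b
  | inr _, inr _ => false
  end.
Lemma corona_sym F : symmetric (@corona_adj F).
Proof. by move=> [a|a] [b|b] //=; rewrite ?(adj_sym _ a) // eq_sym. Qed.
Lemma corona_irr F : irreflexive (@corona_adj F).
Proof. by move=> [a|a] //=; rewrite adj_irr. Qed.
Definition corona (F : sgraph) : sgraph := SGraph (@corona_sym F) (@corona_irr F).

(* Sufficiency: each of the three products has a partition of its vertices into
   cliques that every dominating set must meet (rows or columns of rook's graphs for
   K3 × K3 and K2 × C4, the pendant edges for K2 × (F ⊙ K1)), and a minimal dominating
   set meets each of them once.
   Necessity: if both factors have at least three vertices, the minimal dominating set
   A × V(H), for A a maximal independent set of G, can be undercut unless every
   neighbourhood of G is a clique, so both factors are complete; then {g} × V(H) versus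
   a diagonal of three vertices forces order 3.  If G = K2, the sets {0} × P ∪ {1} × Q
   yield two counting inequalities on the neighbourhoods of H.  They show that a vertex
   has at most one leaf neighbour and that either every vertex is a leaf or adjacent to
   one, so that H is a corona, or no vertex is, and then H is 2-regular with a pair of
   vertices sharing their neighbourhood, i.e. H = C4. *)

From mathcomp Require Import all_boot zify.
Set Implicit Arguments. Unset Strict Implicit. Unset Printing Implicit Defensive.

Definition nbhd (X : sgraph) (x : vertex X) : {set vertex X} := [set y | adj x y].

Definition leaf (X : sgraph) (x : vertex X) : bool := #|nbhd x| == 1.

Definition complete (X : sgraph) : Prop := forall a b : vertex X, a != b -> adj a b.

Definition independent (X : sgraph) (A : {set vertex X}) : bool :=
  [forall u in A, forall w in A, ~~ adj u w].

Lemma in_nbhd (X : sgraph) (x y : vertex X) : (y \in nbhd x) = adj x y.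
Proof. by rewrite inE. Qed.

Lemma adj_neq (X : sgraph) (x y : vertex X) : adj x y -> x != y.
Proof. by apply: contraTneq => ->; rewrite adj_irr. Qed.

Lemma dominatingP (X : sgraph) (D : {set vertex X}) :
  reflect (forall v, v \in D \/ exists2 u, u \in D & adj u v) (dominating D).
Proof.
apply: (iffP forallP) => domD v.
  by case/orP: (domD v) => [|/exists_inP[u]]; [left | right; exists u].
apply/orP; case: (domD v) => [|[u uD uv]]; [by left | right].
by apply/exists_inP; exists u.
Qed.

Lemma minimal_dominatingP (X : sgraph) (D : {set vertex X}) :
  reflect (dominating D /\ forall B, dominating B -> B \subset D -> B = D)
          (minimal_dominating D).
Proof. exact: minsetP. Qed.

Arguments dominatingP {X D}.
Arguments minimal_dominatingP {X D}.

Lemma independentP (X : sgraph) (A : {set vertex X}) :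
  reflect {in A &, forall u w, ~~ adj u w} (independent A).
Proof.
apply: (iffP forallP) => [indA u w uA wA | indA u].
  by have /implyP/(_ uA)/forallP/(_ w)/implyP/(_ wA) := indA u.
by apply/implyP => uA; apply/forallP => w; apply/implyP => wA; apply: indA.
Qed.

Lemma independent_dominating_minimal (X : sgraph) (D : {set vertex X}) :
  independent D -> dominating D -> minimal_dominating D.
Proof.
move=> /independentP indD domD; apply/minimal_dominatingP; split=> // B domB sBD.
apply/eqP; rewrite eqEsubset sBD; apply/subsetP => x xD.
have [//|[u uB ux]] := dominatingP domB x.
by move: (indD u x (subsetP sBD u uB) xD); rewrite ux.
Qed.

Lemma maximal_independent_dominating (X : sgraph) (C : {set vertex X}) :
  independent C -> exists2 A : {set vertex X}, C \subset A & independent A && dominating A.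
Proof.
move=> indC; have [A /maxsetP[indA maxA] sCA] := @maxset_exists _ (@independent X) C indC.
exists A; rewrite // indA; apply/dominatingP => x.
have [xA|xA] := boolP (x \in A); [by left | right].
apply/exists_inP; apply: contraT => /exists_inPn noadj.
suff /maxA/(_ (subsetUr _ _))/setP/(_ x) : independent (x |: A).
  by rewrite !inE eqxx (negbTE xA).
apply/independentP => u w; rewrite !inE => /predU1P[->|uA] /predU1P[->|wA].
- by rewrite adj_irr.
- by rewrite adj_sym noadj.
- by rewrite noadj.
- exact: (independentP _ indA).
Qed.

(* The clique partition may depend on [D].  A minimal dominating set meets each block
   once, since one representative per block still dominates; so [γ = Γ = #|I|]. *)
Lemma well_dominated_clique_cover (X : sgraph) (I : finType)
    (block : {set vertex X} -> vertex X -> I) :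
  (forall D u v, block D u = block D v -> (u == v) || adj u v) ->
  (forall D, dominating D -> forall i, exists2 u, u \in D & block D u = i) ->
  well_dominated X.
Proof.
move=> block_clique block_met D /minimal_dominatingP[domD minD] D' domD'.
apply: (@leq_trans #|I|).
  pose rep i := [pick u in D | block D u == i].
  pose E := [set u in D | rep (block D u) == Some u].
  suff <- : E = D.
    rewrite -(@card_in_imset _ _ (block D)) ?max_card // => u w.
    rewrite !inE => /andP[_ /eqP rep_u] /andP[_ /eqP rep_w] eq_uw.
    by move: rep_u; rewrite eq_uw rep_w => -[].
  apply: minD; last by apply/subsetP => u; rewrite inE => /andP[].
  apply/dominatingP => v; have [u uD uv] := block_met D domD (block D v).
  have [w /andP[wD /eqP wv] rep_v] : exists2 w, (w \in D) && (block D w == block D v)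
                                      & rep (block D v) = Some w.
    rewrite /rep; case: pickP => [w wP | /(_ u)]; first by exists w.
    by rewrite uD uv eqxx.
  have wE : w \in E by rewrite inE wD /= wv rep_v.
  by case/orP: (block_clique D w v wv) => [/eqP <-|wv']; [left | right; exists w].
apply: leq_trans (leq_imset_card (block D') D').
rewrite -cardsT; apply/subset_leq_card/subsetP => i _.
by have [u uD' <-] := block_met D' domD' i; apply: imset_f.
Qed.

Lemma isomorphic_refl (G : sgraph) : isomorphic G G.
Proof. by exists id; split=> //; exists id. Qed.

Lemma isomorphic_sym (G H : sgraph) : isomorphic G H -> isomorphic H G.
Proof.
case=> f [[g fK gK] f_adj]; exists g; split; first by exists f.
by move=> x y; rewrite -f_adj !gK.
Qed.

Lemma isomorphic_trans (G H J : sgraph) :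
  isomorphic G H -> isomorphic H J -> isomorphic G J.
Proof.
case=> f [f_bij f_adj] [g [g_bij g_adj]]; exists (g \o f).
by split=> [|x y /=]; [exact: bij_comp | rewrite g_adj f_adj].
Qed.

Lemma isomorphic_dprod (G G' H H' : sgraph) :
  isomorphic G G' -> isomorphic H H' ->
  isomorphic (dprod_graph G H) (dprod_graph G' H').
Proof.
case=> f [[f' fK f'K] f_adj] [g [[g' gK g'K] g_adj]].
exists (fun p : vertex G * vertex H => (f p.1, g p.2)); split.
  by exists (fun p : vertex G' * vertex H' => (f' p.1, g' p.2)) => -[a b] /=;
    rewrite ?fK ?gK ?f'K ?g'K.
by move=> [a b] [c d]; rewrite /= /dprod_adj /= f_adj g_adj.
Qed.

Lemma isomorphic_dprodC (G H : sgraph) :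
  isomorphic (dprod_graph G H) (dprod_graph H G).
Proof.
exists (fun p : vertex G * vertex H => (p.2, p.1)); split.
  by exists (fun p : vertex H * vertex G => (p.2, p.1)) => -[].
by move=> [a b] [c d]; rewrite /= /dprod_adj /= andbC.
Qed.

Lemma isomorphic_K (X : sgraph) n : #|vertex X| = n -> complete X -> isomorphic (K n) X.
Proof.
move=> cardX complX; exists (fun i : 'I_n => enum_val (cast_ord (esym cardX) i)); split.
  exists (fun x => cast_ord cardX (enum_rank x)) => [i | x].
    by rewrite enum_valK cast_ordKV.
  by rewrite cast_ordK enum_rankK.
move=> i j; rewrite /= /K_adj; have [->|neq_ij] := eqVneq i j; first by rewrite adj_irr.
by apply: complX; apply: contra neq_ij => /eqP /enum_val_inj /cast_ord_inj ->.
Qed.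

Section Transport.

Variables (G H : sgraph) (f : vertex G -> vertex H) (g : vertex H -> vertex G).
Hypotheses (fK : cancel f g) (gK : cancel g f) (f_adj : forall x y, adj (f x) (f y) = adj x y).

Lemma dominating_preimset (E : {set vertex H}) : dominating (f @^-1: E) = dominating E.
Proof.
apply/dominatingP/dominatingP => domE v.
  case: (domE (g v)) => [|[u uE uv]]; first by rewrite inE gK; left.
  by right; exists (f u); [rewrite inE in uE | rewrite -[v]gK f_adj].
case: (domE (f v)) => [fv|[u uE uv]]; first by left; rewrite inE.
by right; exists (g u); [rewrite inE gK | rewrite -f_adj gK].
Qed.

Lemma minimal_dominating_preimset (E : {set vertex H}) :
  minimal_dominating E -> minimal_dominating (f @^-1: E).
Proof.
case/minimal_dominatingP => domE minE; apply/minimal_dominatingP.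
split=> [|B domB sBE]; first by rewrite dominating_preimset.
have gBE : g @^-1: B \subset E.
  by apply/subsetP => x; rewrite inE => /(subsetP sBE); rewrite inE gK.
have fgB : f @^-1: (g @^-1: B) = B by apply/setP => x; rewrite !inE fK.
have domgB : dominating (g @^-1: B) by rewrite -dominating_preimset fgB.
by rewrite -fgB (minE _ domgB gBE).
Qed.

End Transport.

Lemma well_dominated_iso (G H : sgraph) :
  isomorphic G H -> well_dominated G -> well_dominated H.
Proof.
case=> f [[g fK gK] f_adj] wdG D minD D' domD'.
have card_pre (E : {set vertex H}) : #|f @^-1: E| = #|E|.
  by apply: on_card_preimset; apply: onW_bij; exists g.
rewrite -card_pre -(card_pre D').
apply: wdG; first exact: (minimal_dominating_preimset fK gK f_adj).
by rewrite (dominating_preimset gK f_adj).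
Qed.

Lemma connected_closed_setT (X : sgraph) (S : {set vertex X}) (x : vertex X) :
  connected X -> x \in S -> (forall u w, u \in S -> adj u w -> w \in S) ->
  S = [set: vertex X].
Proof.
move=> connX xS closedS; apply/setP => y; rewrite inE.
case/connectP: (connX x y) => p + ->.
by elim: p x xS => //= z p IHp x xS /andP[xz]; apply/IHp/(closedS x).
Qed.

Lemma connected_neighbor (X : sgraph) : connected X -> 1 < #|vertex X| ->
  forall x : vertex X, exists y, adj x y.
Proof.
move=> connX /card_gt1P[a [b [_ _ neq_ab]]] x.
have [y neq_xy] : exists y, x != y.
  by case: (eqVneq x a) => [->|]; [exists b | exists a].
case/connectP: (connX x y) => -[/= _ ey|z p /= /andP[xz _] _]; last by exists z.
by rewrite ey eqxx in neq_xy.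
Qed.

Lemma pendant_edge_card (X : sgraph) (x y : vertex X) : connected X ->
  nbhd x = [set y] -> nbhd y = [set x] -> #|vertex X| <= 2.
Proof.
move=> connX Nx Ny; rewrite -cardsT -(@connected_closed_setT _ [set x; y] x) //.
- by rewrite cards2; case: (x != y).
- exact: set21.
move=> u w /set2P[] -> uw; rewrite -in_nbhd ?Nx ?Ny in uw;
  by rewrite (set1P uw) !inE eqxx ?orbT.
Qed.

Lemma complete_of_card2 (X : sgraph) : connected X -> #|vertex X| = 2 -> complete X.
Proof.
move=> connX cardX a b neq_ab.
have [t at'] := connected_neighbor connX (ltac:(by rewrite cardX)) a.
have [<-//|neq_tb] := eqVneq t b.
suff : 2 < #|vertex X| by rewrite cardX.
apply/card_gt2P; exists t, a, b; split=> //.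
by split; [rewrite eq_sym; exact: adj_neq | | rewrite eq_sym].
Qed.

Lemma exists_non_support_vertex (X : sgraph) : connected X -> 2 < #|vertex X| ->
  exists v : vertex X, forall y, exists2 t, adj y t & t != v.
Proof.
move=> connX gt2_X; have gt1_X := ltnW gt2_X.
pose avoidable (v : vertex X) := [forall y, [exists t, adj y t && (t != v)]].
case: (pickP avoidable) => [v /forallP good|bad].
  by exists v => y; have /existsP[t /andP[]] := good y; exists t.
have pendant (v : vertex X) : exists y, nbhd y = [set v].
  have /forallPn[y /existsPn no_other] := negbT (bad v).
  have only_v t : adj y t -> t = v by move=> yt; move: (no_other t); rewrite yt negbK => /eqP.
  have [t yt] := connected_neighbor connX gt1_X y.
  exists y; apply/setP => z; rewrite in_nbhd inE.
  by apply/idP/eqP => [/only_v | ->] //; rewrite -(only_v t yt).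
have /card_gt0P[v0 _] : 0 < #|vertex X| by apply: ltnW.
have [y0 N_y0] := pendant v0; have [y1 N_y1] := pendant y0.
have y1_v0 : y1 = v0.
  by apply/set1P; rewrite -N_y0 in_nbhd adj_sym -in_nbhd N_y1 set11.
move: gt2_X; rewrite ltnNge (pendant_edge_card connX N_y0) //.
by rewrite -y1_v0.
Qed.

Lemma complete_of_locally_complete (X : sgraph) : connected X ->
  (forall x a b : vertex X, adj x a -> adj x b -> a != b -> adj a b) -> complete X.
Proof.
move=> connX loc a b neq_ab.
have closed : forall u w, u \in a |: nbhd a -> adj u w -> w \in a |: nbhd a.
  move=> u w /setU1P[-> aw | au uw]; first by rewrite !inE aw orbT.
  rewrite !inE in au *; have [//|neq_wa] /= := eqVneq w a.
  by apply: (loc u); [rewrite adj_sym | | rewrite eq_sym].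
have := connected_closed_setT connX (setU11 a _) closed.
by move/setP/(_ b); rewrite !inE eq_sym (negbTE neq_ab).
Qed.

(** * The three well-dominated products *)

(* [X] is a disjoint union of rook's graphs on [R * R], one per [k : C]: the closed
   neighbourhood of [v] is the row and the column of [v] in its component.
   A dominating set must cover all rows or all columns of each component. *)
Lemma rook_well_dominated (X : sgraph) (C R : finType)
    (comp : vertex X -> C) (row col : vertex X -> R) :
  (forall u v, (u == v) || adj u v
               = (comp u == comp v) && ((row u == row v) || (col u == col v))) ->
  (forall k i j, exists v, [&& comp v == k, row v == i & col v == j]) ->
  well_dominated X.
Proof.
move=> closed_adj onto.
pose covers_rows (D : {set vertex X}) k :=
  [forall i, [exists u in D, (comp u == k) && (row u == i)]].
pose block (D : {set vertex X}) w :=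
  (comp w, if covers_rows D (comp w) then row w else col w).
apply: (@well_dominated_clique_cover _ _ block) => [D u v [eq_comp] | D domD [k i]].
  by rewrite closed_adj eq_comp eqxx; case: ifP => _ ->; rewrite eqxx ?orbT.
have [cov|ncov] := boolP (covers_rows D k).
  have /exists_inP[u uD /andP[/eqP uk /eqP ui]] := forallP cov i.
  by exists u => //; rewrite /block uk cov ui.
have /forallPn[i0 /exists_inPn no_i0] := ncov.
have [v /and3P[/eqP vk /eqP vi0 /eqP vi]] := onto k i0 i.
have [u uD uv] : exists2 u, u \in D & (u == v) || adj u v.
  case: (dominatingP domD v) => [vD|[u uD uv]]; first by exists v; rewrite ?eqxx.
  by exists u; rewrite ?uv ?orbT.
rewrite closed_adj vk vi0 vi in uv; case/andP: uv => /eqP uk /orP[/eqP ui0|/eqP ui].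
  by have := no_i0 u uD; rewrite uk ui0 !eqxx.
by exists u => //; rewrite /block uk (negbTE ncov) ui.
Qed.

(* [K 3 × K 3] is the rook's graph [K 3 □ K 3], with rows and columns read mod 3. *)
Lemma well_dominated_K3K3 : well_dominated (dprod_graph (K 3) (K 3)).
Proof.
pose mod3 n : 'I_3 := Ordinal (ltn_pmod n (isT : 0 < 3)).
apply: (@rook_well_dominated (dprod_graph (K 3) (K 3)) unit 'I_3 (fun _ => tt)
  (fun w => mod3 (w.1 + 2 * w.2)) (fun w => mod3 (w.1 + w.2))).
  by move=> [[[|[|[|?]]] ?] [[|[|[|?]]] ?]] [[[|[|[|?]]] ?] [[|[|[|?]]] ?]].
move=> [] i j; exists (mod3 (2 * (i + j)), mod3 (2 * j + i)).
by case: i => [[|[|[|?]]] ?]; case: j => [[|[|[|?]]] ?].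
Qed.

(* [K 2 × C 4] is two disjoint copies of the rook's graph [K 2 □ K 2]. *)
Lemma well_dominated_K2C4 : well_dominated (dprod_graph (K 2) C4).
Proof.
pose mod2 n : 'I_2 := Ordinal (ltn_pmod n (isT : 0 < 2)).
apply: (@rook_well_dominated (dprod_graph (K 2) C4) 'I_2 'I_2 (fun w => mod2 (w.1 + w.2))
  (fun w => mod2 (w.2 %/ 2)) (fun w => mod2 (w.1 + w.2 %/ 2))).
  by move=> [[[|[|?]] ?] [[|[|[|[|?]]]] ?]] [[[|[|?]] ?] [[|[|[|[|?]]]] ?]].
move=> k i j; pose mod4 n : 'I_4 := Ordinal (ltn_pmod n (isT : 0 < 4)).
exists (mod2 (i + j), mod4 (2 * i + (k + i + j) %% 2)).
by case: k => [[|[|?]] ?]; case: i => [[|[|?]] ?]; case: j => [[|[|?]] ?].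
Qed.

Lemma neq_rev_ord2 (i j : 'I_2) : (i != j) = (j == rev_ord i).
Proof. by case: i => [[|[|?]] ?]; case: j => [[|[|?]] ?]. Qed.

Lemma adj_K2l (H : sgraph) (i j : 'I_2) (x y : vertex H) :
  @adj (dprod_graph (K 2) H) (i, x) (j, y) = (j == rev_ord i) && adj x y.
Proof. by rewrite /= /dprod_adj /= /K_adj neq_rev_ord2. Qed.

(* The blocks are the pendant edges [(i, u) -- (rev_ord i, u')]; a dominating set
   meets each of them because it dominates the pendant vertex. *)
Lemma well_dominated_K2_corona (F : sgraph) :
  well_dominated (dprod_graph (K 2) (corona F)).
Proof.
pose block (_ : {set 'I_2 * (vertex F + vertex F)}) (w : 'I_2 * (vertex F + vertex F)) :=
  match w.2 with inl u => (w.1, u) | inr u => (rev_ord w.1, u) end.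
apply: (@well_dominated_clique_cover (dprod_graph (K 2) (corona F)) _ block).
  move=> D [i [a|a]] [j [b|b]] /eqP; rewrite adj_K2l /block /= xpair_eqE.
  - by case/andP=> /eqP -> /eqP ->; rewrite eqxx.
  - by case/andP=> /eqP -> /eqP ->; rewrite rev_ordK !eqxx orbT.
  - by case/andP=> /eqP <- /eqP ->; rewrite !eqxx orbT.
  - by case/andP=> /eqP/(inv_inj rev_ordK) -> /eqP ->; rewrite eqxx.
move=> D domD [i u]; case: (dominatingP domD (rev_ord i, inr u)) => [leafD|[[j w] wD]].
  by exists (rev_ord i, inr u) => //; rewrite /block /= rev_ordK.
rewrite adj_K2l; case: w wD => w wD /andP[/eqP ij] //= /eqP wu.
by exists (j, inl w) => //; rewrite /block /= wu (inv_inj rev_ordK ij).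
Qed.

(** * Two factors of order at least three *)

Lemma setXT_minimal_dominating (G H : sgraph) (A : {set vertex G}) :
  independent A -> dominating A -> (forall y : vertex H, exists t, adj y t) ->
  @minimal_dominating (dprod_graph G H) (setX A [set: vertex H]).
Proof.
move=> /independentP indA domA noisoH; apply: independent_dominating_minimal.
  apply/independentP => -[a y] [b z] /setXP[aA _] /setXP[bA _].
  by rewrite /= /dprod_adj /= (negbTE (indA a b aA bA)).
apply/dominatingP => -[x y]; case: (dominatingP domA x) => [xA|[a aA ax]].
  by left; rewrite !inE xA.
have [t yt] := noisoH y; right; exists (a, t); first by rewrite !inE aA.
by rewrite /= /dprod_adj /= ax adj_sym.
Qed.

Lemma setX_shift_dominating (G H : sgraph) (A C : {set vertex G}) (u v : vertex H) :
  dominating A -> (forall a, a \in A -> exists2 c, c \in C & adj c a) -> adj u v ->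
  (forall y : vertex H, exists2 t, adj y t & t != v) ->
  @dominating (dprod_graph G H) (setX A (~: [set v]) :|: setX C [set u]).
Proof.
move=> domA domCA uv v_avoidable; apply/dominatingP => -[x y].
case: (dominatingP domA x) => [xA|[a aA ax]].
  have [->|yv] := eqVneq y v; last by left; rewrite !inE xA yv.
  have [c cC cx] := domCA x xA; right; exists (c, u); first by rewrite !inE cC eqxx orbT.
  by rewrite /= /dprod_adj /= cx uv.
have [t yt tv] := v_avoidable y; right; exists (a, t); first by rewrite !inE aA tv.
by rewrite /= /dprod_adj /= ax adj_sym.
Qed.

(* Extend a non-edge [a, b] inside [N(x)] to a maximal independent set [A] of [G].
   Then [A × V(H)] is a minimal dominating set of [G × H], but moving the layer
   [A × {v}] to [C × {u}], where [C] dominates [A] and [x] serves for both [a] and [b],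
   gives a dominating set with one vertex less. *)
Lemma dprod_locally_complete (G H : sgraph) (u v : vertex H) :
  well_dominated (dprod_graph G H) -> (forall x : vertex G, exists y, adj x y) ->
  adj u v -> (forall y : vertex H, exists2 t, adj y t & t != v) ->
  forall x a b : vertex G, adj x a -> adj x b -> a != b -> adj a b.
Proof.
move=> wdGH noisoG uv v_avoidable x a b xa xb neq_ab; apply: contraT => nab.
have indab : independent [set a; b].
  by apply/independentP => ? ? /set2P[]-> /set2P[]->; rewrite ?adj_irr // adj_sym.
have [A sabA /andP[indA domA]] := maximal_independent_dominating indab.
have noisoH (y : vertex H) : exists t, adj y t by have [t yt _] := v_avoidable y; exists t.
pose nb (y : vertex G) := odflt y [pick z | adj y z].
have nbP y : adj y (nb y).
  rewrite /nb; case: pickP => [//|none].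
  by have [z yz] := noisoG y; move: (none z); rewrite yz.
pose C := x |: (nb @: (A :\: [set a; b])).
have domCA (c : vertex G) : c \in A -> exists2 c', c' \in C & adj c' c.
  move=> cA; have [cab|cab] := boolP (c \in [set a; b]).
    by exists x; rewrite ?setU11 //; case/set2P: cab => ->.
  exists (nb c); last by rewrite adj_sym.
  by rewrite !inE imset_f ?orbT // inE cab.
have := wdGH _ (setXT_minimal_dominating indA domA noisoH) _
             (setX_shift_dominating domA domCA uv v_avoidable).
apply: contraLR => _; rewrite -ltnNge.
apply: leq_ltn_trans (leq_card_setU _ _) _.
rewrite !cardsX cardsT cardsC1 cards1 muln1.
have : 0 < #|vertex H| by apply/card_gt0P; exists v.
case: #|vertex H| => //= n _.
rewrite mulnS addnC ltn_add2r.
have := subset_leq_card sabA; rewrite cards2 neq_ab => gt1_A.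
rewrite cardsU1; apply: leq_ltn_trans (leq_add (leq_b1 _) (leq_imset_card nb _)) _.
by rewrite cardsD (setIidPr sabA) cards2 neq_ab; lia.
Qed.

Lemma dprod_complete_factor (G H : sgraph) : connected G -> connected H ->
  1 < #|vertex G| -> 2 < #|vertex H| -> well_dominated (dprod_graph G H) -> complete G.
Proof.
move=> connG connH gt1_G gt2_H wdGH; apply: complete_of_locally_complete => //.
have [v v_avoidable] := exists_non_support_vertex connH gt2_H.
have [u vu] := connected_neighbor connH (ltnW gt2_H) v.
rewrite adj_sym in vu.
exact: dprod_locally_complete wdGH (connected_neighbor connG gt1_G) vu v_avoidable.
Qed.

Lemma diagonal_dominating (G H : sgraph) (g1 g2 g3 : vertex G) (h1 h2 h3 : vertex H) :
  complete G -> complete H -> [/\ g1 != g2, g2 != g3 & g3 != g1] ->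
  [/\ h1 != h2, h2 != h3 & h3 != h1] ->
  @dominating (dprod_graph G H) [set (g1, h1); (g2, h2); (g3, h3)].
Proof.
move=> complG complH [g12 g23 g31] [h12 h23 h31]; apply/dominatingP => -[p q]; right.
suff [w wD /andP[wp wq]] : exists2 w, w \in [set (g1, h1); (g2, h2); (g3, h3)]
                                      & (w.1 != p) && (w.2 != q).
  by exists w; rewrite // /= /dprod_adj complG ?complH.
apply/exists_inP; apply: contraT => /exists_inPn /= none.
have := none (g1, h1); have := none (g2, h2); have := none (g3, h3).
rewrite !inE !eqxx ?orbT !negb_and !negbK /= => /(_ isT) + /(_ isT) + /(_ isT).
by do 3 (case/orP => /eqP ?); subst; rewrite ?eqxx in g12 g23 g31 h12 h23 h31.
Qed.

Lemma dprod_complete_card (G H : sgraph) : complete G -> complete H ->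
  2 < #|vertex G| -> well_dominated (dprod_graph G H) -> #|vertex H| <= 3.
Proof.
move=> complG complH /card_gt2P[g1 [g2 [g3 [_ dist_g]]]] wdGH.
case: (leqP #|vertex H| 3) => // gt3_H.
have /card_gt2P[h1 [h2 [h3 [_ dist_h]]]] := ltnW gt3_H.
have indg1 : independent [set g1].
  by apply/independentP => ? ? /set1P-> /set1P->; rewrite adj_irr.
have domg1 : dominating [set g1].
  apply/dominatingP => x; have [->|neq_xg1] := eqVneq x g1; first by left; rewrite set11.
  by right; exists g1; rewrite ?set11 // complG // eq_sym.
have noisoH (y : vertex H) : exists t, adj y t.
  case: dist_h => h12 _ _; have [->|neq_yh1] := eqVneq y h1; last by exists h1; apply: complH.
  by exists h2; apply: complH.
have := wdGH _ (setXT_minimal_dominating indg1 domg1 noisoH) _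
             (diagonal_dominating complG complH dist_g dist_h).
have card_diag : #|[set (g1, h1); (g2, h2); (g3, h3)]| <= 3.
  by rewrite (leq_trans (leq_card_setU _ _)) // cards2 cards1; case: (_ != _).
by rewrite cardsX cards1 cardsT mul1n => /leq_trans/(_ card_diag); rewrite leqNgt gt3_H.
Qed.

(** * Recognising [C 4] and coronas *)

Lemma leaf_nbhd (X : sgraph) (x c : vertex X) : leaf x -> adj x c -> nbhd x = [set c].
Proof.
by move=> /cards1P[d Nx] xc; move: (xc); rewrite -in_nbhd Nx => /set1P <-.
Qed.

Lemma isomorphic_C4 (X : sgraph) (a b c d : vertex X) : connected X ->
  a != c -> b != d -> nbhd a = [set b; d] -> nbhd b = [set a; c] ->
  nbhd c = [set b; d] -> nbhd d = [set a; c] -> isomorphic C4 X.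
Proof.
move=> connX neq_ac neq_bd Na Nb Nc Nd.
have adjE x y : adj x y = (y \in nbhd x) by rewrite in_nbhd.
have [neq_ab neq_ad neq_cb neq_cd] : [/\ a != b, a != d, c != b & c != d].
  by split; apply: adj_neq; rewrite adjE ?Na ?Nc !inE eqxx ?orbT.
have neqE := (negbTE neq_ac, negbTE neq_bd, negbTE neq_ab, negbTE neq_ad,
              negbTE neq_cb, negbTE neq_cd).
have neqE' := (eq_sym b a, eq_sym c a, eq_sym d a, eq_sym b c, eq_sym d c, eq_sym d b).
pose f (i : 'I_4) := nth a [:: a; b; c; d] i.
exists f; split; last first.
  move=> [[|[|[|[|//]]]] ?] [[|[|[|[|//]]]] ?];
    by rewrite /= adjE ?Na ?Nb ?Nc ?Nd !inE ?eqxx ?neqE' ?neqE.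
apply: inj_card_bij.
  move=> [[|[|[|[|//]]]] ?] [[|[|[|[|//]]]] ?] /= /eqP;
    by rewrite ?eqxx ?neqE' ?neqE // => _; apply: val_inj.
rewrite card_ord -cardsT -(@connected_closed_setT _ [set a; b; c; d] a) //.
- do 2 (apply: leq_trans (leq_card_setU _ _) _; rewrite cards1 addn1 ltnS).
  by rewrite cards2; case: (_ != _).
- by rewrite !inE eqxx.
move=> x y; rewrite !inE -!orbA => /or4P[] /eqP ->;
  by rewrite adjE ?Na ?Nb ?Nc ?Nd !inE => /orP[] /eqP ->; rewrite eqxx ?orbT.
Qed.

Definition induced_adj (X : sgraph) (C : pred (vertex X)) : rel {x : vertex X | C x} :=
  fun a b => adj (val a) (val b).

Lemma induced_sym (X : sgraph) (C : pred (vertex X)) : symmetric (@induced_adj X C).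
Proof. by move=> a b; rewrite /induced_adj adj_sym. Qed.

Lemma induced_irr (X : sgraph) (C : pred (vertex X)) : irreflexive (@induced_adj X C).
Proof. by move=> a; rewrite /induced_adj adj_irr. Qed.

Definition induced (X : sgraph) (C : pred (vertex X)) : sgraph :=
  SGraph (@induced_sym X C) (@induced_irr X C).

Lemma exists_involution_transversal (T : finType) (p : T -> T) :
  involutive p -> (forall x, p x != x) -> exists C : pred T, forall x, C (p x) = ~~ C x.
Proof.
move=> pK p_neq; exists (fun x => enum_rank x < enum_rank (p x)) => x.
by rewrite pK -leqNgt ltn_neqAle (inj_eq (@ord_inj _)) (inj_eq enum_rank_inj) p_neq.
Qed.

Section PendantMatching.

Variables (X : sgraph) (C : pred (vertex X)) (p : vertex X -> vertex X).
Hypotheses (pK : involutive p) (pC : forall x, C (p x) = ~~ C x)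
           (p_pendant : forall x, C x -> nbhd (p x) = [set x]).

Lemma isomorphic_corona_induced : isomorphic (corona (induced C)) X.
Proof.
pose phi (z : vertex (corona (induced C))) :=
  match z with inl a => val a | inr a => p (val a) end.
have adj_p a x : C a -> adj (p a) x = (x == a) by move=> Ca; rewrite -in_nbhd p_pendant ?inE.
exists phi; split.
  apply: inj_card_bij => [[a|a] [b|b] /= eq_ab|].
  - by congr inl; apply: val_inj.
  - by have := pC (val b); rewrite -eq_ab (valP a) (valP b).
  - by have := pC (val a); rewrite eq_ab (valP a) (valP b).
  - by congr inr; apply/val_inj/(can_inj pK).
  apply: leq_trans (leq_image_card phi predT); apply/subset_leq_card/subsetP => x _.
  apply/codomP; have [Cx|nCx] := boolP (C x); first by exists (inl (exist _ x Cx)).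
  have Cpx : C (p x) by rewrite pC.
  by exists (inr (exist _ (p x) Cpx)); rewrite /= pK.
move=> [a|a] [b|b] /=.
- by [].
- by rewrite adj_sym adj_p ?(valP b) // val_eqE.
- by rewrite adj_p ?(valP a) // eq_sym val_eqE.
- rewrite adj_p ?(valP a) //; apply/negbTE/eqP => eq_ba.
  by have := pC (val b); rewrite eq_ba (valP a) (valP b).
Qed.

(* Sending each pendant vertex to its attachment vertex is a retraction onto [C]
   mapping every edge to an edge or a loop. *)
Lemma connected_induced : connected X -> connected (induced C).
Proof.
move=> connX.
have C_r x : C (if C x then x else p x) by case: ifP => // /negbT; rewrite -pC.
pose r x : vertex (induced C) := exist (fun y => C y) _ (C_r x).
have rK (a : vertex (induced C)) : r (val a) = a by apply: val_inj; rewrite /= (valP a).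
have N_out x : ~~ C x -> nbhd x = [set p x].
  by move=> nCx; rewrite -{1}(pK x) p_pendant ?pC.
have r_adj x y : adj x y -> connect (@adj (induced C)) (r x) (r y).
  move=> xy; case Cx: (C x); case Cy: (C y).
  - by apply: connect1; rewrite /= /induced_adj /= Cx Cy.
  - suff -> : r x = r y by apply: connect0.
    apply: val_inj; rewrite /= Cx Cy; apply/set1P.
    by rewrite -N_out ?Cy // in_nbhd adj_sym.
  - suff -> : r x = r y by apply: connect0.
    by apply: val_inj; rewrite /= Cx Cy; apply/esym/set1P; rewrite -N_out ?Cx // in_nbhd.
  - move: xy; rewrite -in_nbhd N_out ?Cx // => /set1P eq_y.
    by move: Cy; rewrite eq_y pC Cx.
move=> a b; rewrite -(rK a) -(rK b).
case/connectP: (connX (val a) (val b)) => s + ->.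
elim: s (val a) => [|z s IHs] x /=; first by rewrite connect0.
by case/andP=> xz /IHs; apply: connect_trans (r_adj _ _ xz).
Qed.

End PendantMatching.

(** * Products with [K 2] *)

Definition layers (H : sgraph) (P Q : {set vertex H}) :
    {set vertex (dprod_graph (K 2) H)} :=
  setX [set ord0] P :|: setX [set ord_max] Q.

Lemma ord2P (i : 'I_2) : i = ord0 \/ i = ord_max.
Proof. by case: i => [[|[|//]] ?]; [left | right]; apply: val_inj. Qed.

Lemma in_layers (H : sgraph) (P Q : {set vertex H}) i x :
  ((i, x) \in layers P Q) = (i == ord0) && (x \in P) || (i == ord_max) && (x \in Q).
Proof. by rewrite !inE. Qed.

Lemma card_layers (H : sgraph) (P Q : {set vertex H}) : #|layers P Q| = #|P| + #|Q|.
Proof.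
rewrite cardsU !cardsX !cards1 !mul1n -[RHS]subn0; congr (_ - _).
by apply/eqP; rewrite cards_eq0; apply/eqP/setP => -[i x]; rewrite !inE andbACA -andbA;
  case: (ord2P i) => ->.
Qed.

Lemma layers_dominating (H : sgraph) (P Q : {set vertex H}) :
  (forall x, x \in P \/ exists2 w, w \in Q & adj w x) ->
  (forall x, x \in Q \/ exists2 w, w \in P & adj w x) -> dominating (layers P Q).
Proof.
move=> domP domQ; apply/dominatingP => -[i x]; case: (ord2P i) => ->.
  case: (domP x) => [xP|[w wQ wx]]; first by left; rewrite in_layers xP.
  by right; exists (ord_max, w); rewrite ?in_layers ?wQ ?orbT // adj_K2l wx.
case: (domQ x) => [xQ|[w wP wx]]; first by left; rewrite in_layers xQ orbT.
by right; exists (ord0, w); rewrite ?in_layers ?wP // adj_K2l wx.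
Qed.

Lemma layers_minimal (H : sgraph) (P Q : {set vertex H}) :
  {in P & Q, forall x y, ~~ adj x y} ->
  dominating (layers P Q) -> minimal_dominating (layers P Q).
Proof.
move=> nadjPQ; apply: independent_dominating_minimal; apply/independentP.
move=> [i x] [j y]; rewrite !in_layers adj_K2l.
case: (ord2P i) (ord2P j) => -> [] -> //=; rewrite ?orbF => xPQ yPQ.
  exact: nadjPQ.
by rewrite adj_sym nadjPQ.
Qed.

Definition leaf_free (X : sgraph) (x : vertex X) : bool :=
  [forall y, (y == x) || adj x y ==> ~~ leaf y].

Section K2Product.

Variable H : sgraph.
Hypotheses (connH : connected H) (gt1_H : 1 < #|vertex H|)
           (wdH : well_dominated (dprod_graph (K 2) H)).

Lemma card_nbhd_gt0 (x : vertex H) : 0 < #|nbhd x|.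
Proof.
by have [y xy] := connected_neighbor connH gt1_H x; apply/card_gt0P; exists y; rewrite in_nbhd.
Qed.

Lemma layer_minimal : minimal_dominating (layers [set: vertex H] set0).
Proof.
apply: layers_minimal; first by move=> x y _; rewrite inE.
apply: layers_dominating => x; first by left; rewrite inE.
by right; have [y xy] := connected_neighbor connH gt1_H x; exists y; rewrite // adj_sym.
Qed.

Lemma card_dominating_K2 (D : {set vertex (dprod_graph (K 2) H)}) :
  dominating D -> #|vertex H| <= #|D|.
Proof. by move/(wdH layer_minimal); rewrite card_layers cards0 addn0 cardsT. Qed.

Lemma card_minimal_dominating_K2 (D : {set vertex (dprod_graph (K 2) H)}) :
  minimal_dominating D -> #|D| <= #|vertex H|.
Proof.
move=> minD; have /minimal_dominatingP[domL _] := layer_minimal.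
by have := wdH minD domL; rewrite card_layers cards0 addn0 cardsT.
Qed.

Lemma card_subset_nbhd (u : vertex H) (S : {set vertex H}) : S \subset nbhd u ->
  #|S| <= 1 + #|[set z | (z != u) && (nbhd z \subset S)]|.
Proof.
move=> sSN; set Z := [set z | _].
have domD : dominating (layers (~: S) (u |: Z)).
  apply: layers_dominating => x.
    have [xS|xS] := boolP (x \in S); last by left; rewrite inE xS.
    by right; exists u; rewrite ?setU11 // -in_nbhd (subsetP sSN).
  have [->|neq_xu] := eqVneq x u; first by left; rewrite setU11.
  have [sNS|/subsetPn[w]] := boolP (nbhd x \subset S).
    by left; rewrite !inE neq_xu sNS orbT.
  by rewrite in_nbhd => xw wS; right; exists w; rewrite ?inE // adj_sym.
have := card_dominating_K2 domD; rewrite card_layers cardsU1.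
have := cardsC S; case: (u \notin Z) => /=; lia.
Qed.

Lemma card_nbhd_subset_nbhd (u : vertex H) :
  #|[set z | nbhd z \subset nbhd u]| <= #|nbhd u|.
Proof.
set Q := [set z | _].
have minD : minimal_dominating (layers (~: nbhd u) Q).
  apply: layers_minimal.
    move=> x y xN yQ; rewrite inE in yQ; rewrite in_setC in xN.
    by apply: contra xN => xy; apply: (subsetP yQ); rewrite in_nbhd adj_sym.
  apply: layers_dominating => x.
    have [xN|xN] := boolP (x \in nbhd u); last by left; rewrite inE xN.
    by right; exists u; rewrite ?inE ?subxx // -in_nbhd.
  have [xQ|/subsetPn[w]] := boolP (nbhd x \subset nbhd u); first by left; rewrite /Q inE.
  by rewrite in_nbhd => xw wN; right; exists w; [rewrite in_setC | rewrite adj_sym].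
have := card_minimal_dominating_K2 minD; rewrite card_layers.
have := cardsC (nbhd u); lia.
Qed.

Lemma leaf_neighbor_uniq (c t1 t2 : vertex H) :
  leaf t1 -> leaf t2 -> adj c t1 -> adj c t2 -> t1 = t2.
Proof.
move=> leaf1 leaf2 ct1 ct2.
have N1 : nbhd t1 = [set c] by apply: leaf_nbhd; rewrite // adj_sym.
have N2 : nbhd t2 = [set c] by apply: leaf_nbhd; rewrite // adj_sym.
have sub : [set t1; t2] \subset [set z | nbhd z \subset nbhd t1].
  by apply/subsetP => z; rewrite !inE => /orP[] /eqP ->; rewrite ?N2 N1.
have := leq_trans (subset_leq_card sub) (card_nbhd_subset_nbhd t1).
by rewrite cards2 N1 cards1; case: eqVneq.
Qed.

Lemma leaf_free_adj (x v : vertex H) : leaf_free x -> adj x v -> leaf_free v.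
Proof.
move=> /forallP free_x xv; apply/forallP => t; apply/implyP => /orP[/eqP -> | vt].
  by apply: (implyP (free_x v)); rewrite xv orbT.
apply/negP => leaf_t.
have neq_xt : x != t.
  by apply: contraTneq leaf_t => <-; apply: (implyP (free_x x)); rewrite eqxx.
have Nt : nbhd t = [set v] by apply: leaf_nbhd; rewrite // adj_sym.
have sxtN : [set x; t] \subset nbhd v.
  by apply/subsetP => y /set2P[] ->; rewrite in_nbhd // adj_sym.
have := card_subset_nbhd sxtN; rewrite cards2 neq_xt ltnS card_gt0 => /set0Pn[z].
rewrite inE => /andP[neq_zv sNz].
have Nz : nbhd z = [set x].
  apply/eqP; rewrite eqEcard cards1 card_nbhd_gt0 andbT; apply/subsetP => y yNz.
  have /set2P[->|eq_yt] := subsetP sNz y yNz; first exact: set11.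
  by move: yNz; rewrite eq_yt in_nbhd adj_sym -in_nbhd Nt inE (negbTE neq_zv).
have xz : adj x z by rewrite adj_sym -in_nbhd Nz set11.
by move: (implyP (free_x z)); rewrite xz orbT /leaf Nz cards1 => /(_ isT).
Qed.

Lemma leaf_free_all (x : vertex H) : leaf_free x -> forall y : vertex H, leaf_free y.
Proof.
move=> free_x y; pose S := [set z : vertex H | leaf_free z].
suff : y \in S by rewrite inE.
rewrite (@connected_closed_setT _ S x connH) ?inE //.
by move=> u w; rewrite !inE; apply: leaf_free_adj.
Qed.

Section AllLeafFree.

Hypothesis all_free : forall x : vertex H, leaf_free x.

Lemma card_nbhd_gt1 (x : vertex H) : 1 < #|nbhd x|.
Proof.
have := implyP (forallP (all_free x) x); rewrite eqxx /leaf => /(_ isT).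
by have := card_nbhd_gt0 x; case: #|nbhd x| => [|[]].
Qed.

Lemma exists_nbhd_pair (u v w : vertex H) : adj u v -> adj u w -> v != w ->
  exists2 y, y != u & nbhd y = [set v; w].
Proof.
move=> uv uw neq_vw; have svwN : [set v; w] \subset nbhd u.
  by apply/subsetP => y /set2P[] ->; rewrite in_nbhd.
have := card_subset_nbhd svwN; rewrite cards2 neq_vw ltnS card_gt0 => /set0Pn[z].
rewrite inE => /andP[neq_zu sNz]; exists z => //; apply/eqP.
by rewrite eqEcard sNz cards2 neq_vw card_nbhd_gt1.
Qed.

(* Three neighbours [v, w, t] of [u] give vertices [y1, y2] with neighbourhoods
   [{v, w}] and [{v, t}].  With [u] and the vertices whose neighbourhood avoids [v]
   they are too many vertices with neighbourhood inside [N(u)]. *)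
Lemma card_nbhd_le2 (u : vertex H) : #|nbhd u| <= 2.
Proof.
rewrite leqNgt; apply/negP => /card_gt2P[v [w [t [[uv uw ut] [neq_vw neq_wt neq_tv]]]]].
rewrite !in_nbhd in uv uw ut.
have [y1 neq_y1u N1] := exists_nbhd_pair uv uw neq_vw.
have [y2 neq_y2u N2] : exists2 y2, y2 != u & nbhd y2 = [set v; t].
  by apply: exists_nbhd_pair; rewrite // eq_sym.
set Z := [set z | (z != u) && (nbhd z \subset nbhd u :\ v)].
have card_Z := card_subset_nbhd (subD1set (nbhd u) v); rewrite -/Z in card_Z.
have notin_Z y : v \in nbhd y -> y \notin Z.
  move=> vNy; rewrite inE negb_and; apply/orP; right.
  by apply/subsetPn; exists v; rewrite ?setD11.
have y2Z : y2 \notin Z by apply: notin_Z; rewrite N2 set21.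
have y1y2Z : y1 \notin y2 |: Z.
  rewrite in_setU1 negb_or notin_Z ?N1 ?set21 // andbT.
  apply/eqP => eq_y12; have := set22 v w; rewrite -N1 eq_y12 N2.
  by case/set2P => eq_w; [move: neq_vw | move: neq_wt]; rewrite eq_w eqxx.
have uy1y2Z : u \notin y1 |: (y2 |: Z).
  by rewrite !in_setU1 !negb_or !(eq_sym u) neq_y1u neq_y2u inE eqxx.
have sub : u |: (y1 |: (y2 |: Z)) \subset [set z | nbhd z \subset nbhd u].
  apply/subsetP => z; rewrite !in_setU1 inE => /or4P[/eqP-> | /eqP-> | /eqP-> | zZ] //.
  - by rewrite N1; apply/subsetP => q /set2P[] ->; rewrite in_nbhd.
  - by rewrite N2; apply/subsetP => q /set2P[] ->; rewrite in_nbhd.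
  - by rewrite inE in zZ; case/andP: zZ => _ /subset_trans; apply; apply: subD1set.
have := leq_trans (subset_leq_card sub) (card_nbhd_subset_nbhd u).
rewrite cardsU1 uy1y2Z cardsU1 y1y2Z cardsU1 y2Z.
by rewrite (cardsD1 v (nbhd u)) in_nbhd uv in card_Z *; lia.
Qed.

Lemma nbhd_eq_pair (u v w : vertex H) : adj u v -> adj u w -> v != w -> nbhd u = [set v; w].
Proof.
move=> uv uw neq_vw; apply/eqP; rewrite eq_sym eqEcard cards2 neq_vw card_nbhd_le2 andbT.
by apply/subsetP => y /set2P[] ->; rewrite in_nbhd.
Qed.

Lemma isomorphic_C4_leaf_free : isomorphic C4 H.
Proof.
have /card_gt0P[u _] : 0 < #|vertex H| by apply: ltnW.
have /card_gt1P[v [w [uv uw neq_vw]]] := card_nbhd_gt1 u.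
rewrite !in_nbhd in uv uw.
have [y neq_yu Ny] := exists_nbhd_pair uv uw neq_vw.
have vy : adj v y by rewrite adj_sym -in_nbhd Ny set21.
have wy : adj w y by rewrite adj_sym -in_nbhd Ny set22.
have neq_uy : u != y by rewrite eq_sym.
apply: (isomorphic_C4 connH neq_uy neq_vw) => //; first exact: nbhd_eq_pair.
- by apply: nbhd_eq_pair; rewrite // adj_sym.
- by apply: nbhd_eq_pair; rewrite // adj_sym.
Qed.

End AllLeafFree.

Definition partner (x : vertex H) : vertex H :=
  odflt x [pick y | adj x y && (leaf x || leaf y)].

Section NoLeafFree.

Hypothesis no_free : forall x : vertex H, ~~ leaf_free x.

Lemma partnerP (x : vertex H) : adj x (partner x) && (leaf x || leaf (partner x)).
Proof.
rewrite /partner; case: pickP => [//|none].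
have /forallPn[y] := no_free x; rewrite negb_imply negbK => /andP[/orP[/eqP-> | xy] leaf_y].
  by have [t xt] := connected_neighbor connH gt1_H x; move: (none t); rewrite xt leaf_y.
by move: (none y); rewrite xy leaf_y orbT.
Qed.

Lemma partner_uniq (x y : vertex H) : adj x y -> leaf x || leaf y -> y = partner x.
Proof.
move=> xy; have /andP[xp leaf_xp] := partnerP x.
have [leaf_x _|nleaf_x /= leaf_y] := boolP (leaf x).
  by apply: set1_inj; rewrite -(leaf_nbhd leaf_x xy) -(leaf_nbhd leaf_x xp).
by apply: (leaf_neighbor_uniq leaf_y _ xy xp); rewrite (negbTE nleaf_x) in leaf_xp.
Qed.

Lemma partnerK : involutive partner.
Proof.
move=> x; have /andP[xp leaf_xp] := partnerP x.
by apply/esym/partner_uniq; rewrite 1?adj_sym // orbC.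
Qed.

Lemma corona_leaf_partner : exists F : sgraph,
  0 < gorder F /\ connected F /\ isomorphic (corona F) H.
Proof.
have neq_p x : partner x != x by rewrite eq_sym adj_neq //; case/andP: (partnerP x).
have [T pT] := exists_involution_transversal partnerK neq_p.
pose C x := leaf (partner x) && (leaf x ==> T x).
have pC x : C (partner x) = ~~ C x.
  rewrite /C partnerK pT; have /andP[_] := partnerP x.
  by case: (leaf x) (leaf (partner x)) => -[].
have pendant x : C x -> nbhd (partner x) = [set x].
  case/andP => leaf_p _; apply: leaf_nbhd => //.
  by rewrite adj_sym; case/andP: (partnerP x).
exists (induced C); split; last split.
- have /card_gt0P[x _] : 0 < #|vertex H| by apply: ltnW.
  have C_x : C (if C x then x else partner x) by case: ifP => // /negbT; rewrite -pC.
  by apply/card_gt0P; exists (exist (fun y => C y) _ C_x).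
- exact: connected_induced partnerK pC pendant connH.
- exact: isomorphic_corona_induced partnerK pC pendant.
Qed.

End NoLeafFree.

Lemma K2_dprod_well_dominated_shape : isomorphic C4 H \/
  exists F : sgraph, 0 < gorder F /\ connected F /\ isomorphic (corona F) H.
Proof.
have [/existsP[x free_x]|/existsPn no_free] := boolP [exists x : vertex H, leaf_free x].
  by left; apply: isomorphic_C4_leaf_free; apply: leaf_free_all free_x.
by right; apply: corona_leaf_partner.
Qed.

End K2Product.

Lemma dprod_large_K3K3 (G H : sgraph) : connected G -> connected H ->
  2 < #|vertex G| -> 2 < #|vertex H| -> well_dominated (dprod_graph G H) ->
  isomorphic (dprod_graph G H) (dprod_graph (K 3) (K 3)).
Proof.
move=> connG connH gt2_G gt2_H wdGH.
have wdHG := well_dominated_iso (isomorphic_dprodC G H) wdGH.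
have complG := dprod_complete_factor connG connH (ltnW gt2_G) gt2_H wdGH.
have complH := dprod_complete_factor connH connG (ltnW gt2_H) gt2_G wdHG.
have le3_H := dprod_complete_card complG complH gt2_G wdGH.
have le3_G := dprod_complete_card complH complG gt2_H wdHG.
by apply: isomorphic_dprod; apply: isomorphic_sym; apply: isomorphic_K => //; apply/eqP;
  rewrite eqn_leq ?le3_G ?le3_H.
Qed.

Definition K2_C4_or_corona (X : sgraph) : Prop :=
  isomorphic X (dprod_graph (K 2) C4) \/
  exists F : sgraph, 0 < gorder F /\ connected F /\
    isomorphic X (dprod_graph (K 2) (corona F)).

Lemma K2_C4_or_corona_iso (X Y : sgraph) :
  isomorphic X Y -> K2_C4_or_corona Y -> K2_C4_or_corona X.
Proof.
move=> isoXY [isoY|[F [F0 [connF isoY]]]]; first by left; apply: isomorphic_trans isoY.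
by right; exists F; do 2 split=> //; apply: isomorphic_trans isoY.
Qed.

Lemma dprod_K2_factor (G H : sgraph) : connected G -> #|vertex G| = 2 ->
  connected H -> 1 < #|vertex H| -> well_dominated (dprod_graph G H) ->
  K2_C4_or_corona (dprod_graph G H).
Proof.
move=> connG eq2_G connH gt1_H wdGH.
have isoG : isomorphic (K 2) G := isomorphic_K eq2_G (complete_of_card2 connG eq2_G).
have isoGH := isomorphic_dprod (isomorphic_sym isoG) (isomorphic_refl H).
case: (K2_dprod_well_dominated_shape connH gt1_H (well_dominated_iso isoGH wdGH)).
  move=> isoC4; left.
  exact: isomorphic_dprod (isomorphic_sym isoG) (isomorphic_sym isoC4).
move=> [F [F0 [connF isoF]]]; right; exists F; do 2 split=> //.
exact: isomorphic_dprod (isomorphic_sym isoG) (isomorphic_sym isoF).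
Qed.

Theorem theorem2 (G H : sgraph) :
  1 < gorder G -> 1 < gorder H -> connected G -> connected H ->
  well_dominated (dprod_graph G H) <->
  (isomorphic (dprod_graph G H) (dprod_graph (K 3) (K 3)) \/
   isomorphic (dprod_graph G H) (dprod_graph (K 2) C4) \/
   exists F : sgraph, 0 < gorder F /\ connected F /\
     isomorphic (dprod_graph G H) (dprod_graph (K 2) (corona F))).
Proof.
rewrite /gorder => gt1_G gt1_H connG connH; split=> [wdGH|]; last first.
  case=> [iso|[iso|[F [_ [_ iso]]]]]; apply: (well_dominated_iso (isomorphic_sym iso)).
  - exact: well_dominated_K3K3.
  - exact: well_dominated_K2C4.
  - exact: well_dominated_K2_corona.
have [eq2_G|neq2_G] := eqVneq #|vertex G| 2; first by right; apply: dprod_K2_factor.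
have [eq2_H|neq2_H] := eqVneq #|vertex H| 2.
  right; apply: K2_C4_or_corona_iso (isomorphic_dprodC G H) _.
  exact: dprod_K2_factor (well_dominated_iso (isomorphic_dprodC G H) wdGH).
by left; apply: dprod_large_K3K3; rewrite // ltn_neqAle eq_sym ?neq2_G ?neq2_H.
Qed.
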